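(* Let $\mathcal{R}$ be a 2-torsion free unital prime ring containing a nontrivial idempotent $P$ (i.e. $P^2=P$, $P\neq0$, $P\neq I$). If $\phi:\mathcal{R}\to\mathcal{R}$ is an additive mapping such that $\phi(A)\circ B+A\circ\phi(B)=0$ for all $A,B\in\mathcal{R}$ with $AB=BA=0$, then there exist a derivation $\delta:\mathcal{R}\to\mathcal{R}$ and a multiplier $\eta:\mathcal{R}\to\mathcal{R}$ such that $\phi=\delta+\eta$. If moreover $\phi(I)=0$, then $\phi$ is a derivation.
   Context: A ring $\mathcal{R}$ is prime if $A\mathcal{R}B=\{0\}$ implies $A=0$ or $B=0$. 2-torsion free: $2X=0\Rightarrow X=0$. $X\circ Y=XY+YX$. An additive $\delta$ is a derivation if $\delta(XY)=\delta(X)Y+X\delta(Y)$; an additive $\eta$ is a multiplier if $\eta(X)=\eta(I)X=X\eta(I)$ for all $X$. *)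

From HB Require Import structures.
From mathcomp Require Import all_boot all_order all_algebra.
Set Implicit Arguments. Unset Strict Implicit. Unset Printing Implicit Defensive.
Import GRing.Theory.
Local Open Scope ring_scope.

Definition jprod (R : nzRingType) (X Y : R) : R := X * Y + Y * X.

Definition additive_map (R : nzRingType) (f : R -> R) : Prop :=
  forall X Y : R, f (X + Y) = f X + f Y.

Definition prime_ring (R : nzRingType) : Prop :=
  forall A B : R, (forall X : R, A * X * B = 0) -> A = 0 \/ B = 0.

Definition two_torsion_free (R : nzRingType) : Prop :=
  forall X : R, X *+ 2 = 0 -> X = 0.

Definition is_derivation (R : nzRingType) (d : R -> R) : Prop :=
  additive_map d /\ forall X Y : R, d (X * Y) = d X * Y + X * d Y.

Definition is_multiplier (R : nzRingType) (e : R -> R) : Prop :=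
  additive_map e /\ forall X : R, e X = e 1 * X /\ e X = X * e 1.

From HB Require Import structures.
From mathcomp Require Import all_boot all_order all_algebra.
Import GRing.Theory.
Local Open Scope ring_scope.
Set Implicit Arguments. Unset Strict Implicit.

(* Let c = phi(1).  Testing the hypothesis on the orthogonal pair (e, 1 - e)
   shows that c commutes with every idempotent e; as the idempotents
   P + P x Q and Q + Q x P (Q = 1 - P) reach all off-diagonal Peirce corners,
   primeness makes c central.  Then delta = phi - c * _ satisfies the same
   hypothesis and delta(1) = 0.  Correcting delta by an inner derivation makes
   it vanish on P and Q; it then maps each Peirce corner e R f (e, f in {P, Q})
   into itself, and testing the hypothesis on suitable orthogonal pairs built
   from corner elements, together with 2-torsion freeness and primeness,
   yields the Leibniz rule corner by corner. *)

Inductive zexpr := ZVar of nat | ZAdd of zexpr & zexpr | ZOpp of zexpr | ZZero.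

Fixpoint zeval (V : zmodType) (env : seq V) (t : zexpr) : V :=
  match t with
  | ZVar n => env`_n
  | ZAdd a b => zeval env a + zeval env b
  | ZOpp a => - zeval env a
  | ZZero => 0
  end.

Fixpoint zcoef (t : zexpr) (n : nat) : int :=
  match t with
  | ZVar m => (m == n)%:Z
  | ZAdd a b => zcoef a n + zcoef b n
  | ZOpp a => - zcoef a n
  | ZZero => 0
  end.

Lemma zeval_sum (V : zmodType) (env : seq V) (t : zexpr) (N : nat) :
  (size env <= N)%N -> zeval env t = \sum_(i < N) env`_i *~ zcoef t i.
Proof.
move=> leN; elim: t => [m|a iha b ihb|a iha|] /=.
- case: (ltnP m N) => [ltmN|leNm].
    rewrite (bigD1 (Ordinal ltmN)) //= eqxx big1 ?addr0 // => i /eqP neq_im.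
    by case: eqP => // eq_mi; case: neq_im; apply: val_inj.
  rewrite nth_default ?(leq_trans leN leNm) // big1 // => i _.
  by case: eqP => // eq_mi; move: (ltn_ord i); rewrite -eq_mi ltnNge leNm.
- by rewrite iha ihb -big_split; apply: eq_bigr => i _; rewrite mulrzDr.
- by rewrite iha -sumrN; apply: eq_bigr => i _; rewrite mulrNz.
- by rewrite big1 // => i _; rewrite mulr0z.
Qed.

Lemma zeval_eq (V : zmodType) (env : seq V) (t1 t2 : zexpr) :
  [seq zcoef t1 i | i <- iota 0 (size env)] ==
  [seq zcoef t2 i | i <- iota 0 (size env)] -> zeval env t1 = zeval env t2.
Proof.
move=> /eqP eq_coef; rewrite !(zeval_sum _ (leqnn _)); apply: eq_bigr => i _.
have := congr1 (nth 0 ^~ i) eq_coef.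
by rewrite !(nth_map 0%N) ?size_iota // nth_iota // add0n => ->.
Qed.

Ltac zindex t env :=
  match env with
  | (?x :: _) => constr:((ltac:(unify x t; exact 0%N)) : nat)
  | (_ :: ?rest) => let k := zindex t rest in constr:(S k)
  end.

Ltac zadd_atom t env :=
  match env with
  | nil => constr:(t :: nil)
  | (?x :: _) => let _ := constr:((ltac:(unify x t; exact 0%N)) : nat) in env
  | (?x :: ?rest) => let r := zadd_atom t rest in constr:(x :: r)
  end.

Ltac zatoms t env :=
  lazymatch t with
  | @GRing.add _ ?a ?b => let env1 := zatoms a env in zatoms b env1
  | @GRing.opp _ ?a => zatoms a env
  | @GRing.zero _ => env
  | _ => zadd_atom t env
  end.

Ltac zreify t env :=
  lazymatch t with
  | @GRing.add _ ?a ?b =>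
      let x := zreify a env in let y := zreify b env in constr:(ZAdd x y)
  | @GRing.opp _ ?a => let x := zreify a env in constr:(ZOpp x)
  | @GRing.zero _ => constr:(ZZero)
  | _ => let n := zindex t env in constr:(ZVar n)
  end.

(* Proves an equality that holds in the free abelian group generated by the
   maximal non-additive subterms of both sides. *)
Ltac zmod_ac :=
  lazymatch goal with
  | |- @eq ?T ?l ?r =>
    let env := zatoms r ltac:(zatoms l (@nil T)) in
    let tl := zreify l env in
    let tr := zreify r env in
    change (zeval env tl = zeval env tr);
    apply: zeval_eq; vm_compute; reflexivity
  end.

Lemma zmod_eq_from (V : zmodType) (x y l : V) : x - y = l -> l = 0 -> x = y.
Proof. by move=> eq_l l0; apply/eqP; rewrite -subr_eq0 eq_l l0. Qed.

Lemma zmod_eq_fromN (V : zmodType) (x y l : V) : x - y = - l -> l = 0 -> x = y.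
Proof. by move=> eq_l l0; apply/eqP; rewrite -subr_eq0 eq_l l0 oppr0. Qed.

Ltac zmod_ac_from H :=
  first [ apply: (zmod_eq_from _ H); zmod_ac
        | apply: (zmod_eq_fromN _ H); zmod_ac ].

Lemma mulr_subst2 (R : nzRingType) (u v w : R) :
  u * v = w -> forall x, x * u * v = x * w.
Proof. by move=> uv x; rewrite -mulrA uv. Qed.

Ltac ring_expand :=
  repeat progress rewrite ?mulrDl ?mulrDr ?mulNr ?mulrN ?opprK ?opprD ?mulrA
    ?mulr0 ?mul0r ?addr0 ?add0r ?oppr0 ?mulr1 ?mul1r.

Ltac ring_expand_in H :=
  repeat progress rewrite ?mulrDl ?mulrDr ?mulNr ?mulrN ?opprK ?opprD ?mulrA
    ?mulr0 ?mul0r ?addr0 ?add0r ?oppr0 ?mulr1 ?mul1r in H.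

Ltac peirce_simpl ee ff ef fe :=
  repeat progress rewrite ?ee ?ff ?ef ?fe ?(mulr_subst2 ee) ?(mulr_subst2 ff)
    ?(mulr_subst2 ef) ?(mulr_subst2 fe) ?mulr0 ?mul0r ?addr0 ?add0r ?oppr0.

Ltac peirce_simpl_in H ee ff ef fe :=
  repeat progress rewrite ?ee ?ff ?ef ?fe ?(mulr_subst2 ee) ?(mulr_subst2 ff)
    ?(mulr_subst2 ef) ?(mulr_subst2 fe) ?mulr0 ?mul0r ?addr0 ?add0r ?oppr0 in H.

Ltac peirce_norm ee ff ef fe :=
  ring_expand; peirce_simpl ee ff ef fe; ring_expand; peirce_simpl ee ff ef fe.

Ltac peirce_norm_in H ee ff ef fe :=
  ring_expand_in H; peirce_simpl_in H ee ff ef fe.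

Ltac sandwich H u v K :=
  pose proof (congr1 (fun z => u * z * v) H) as K; rewrite /= mulr0 mul0r in K.

Definition orth_jderivable (R : nzRingType) (d : R -> R) : Prop :=
  forall A B : R, A * B = 0 -> B * A = 0 -> jprod (d A) B + jprod A (d B) = 0.

Definition leibniz_at (R : nzRingType) (d : R -> R) (s t : R) : Prop :=
  d (s * t) = d s * t + s * d t.

Section AdditiveMap.

Variables (R : nzRingType) (d : R -> R).
Hypothesis dD : additive_map d.

Lemma additive_map0 : d 0 = 0.
Proof. by apply: (addrI (d 0)); rewrite -dD !addr0. Qed.

Lemma additive_mapN x : d (- x) = - d x.
Proof. by apply: (addrI (d x)); rewrite -dD !subrr additive_map0. Qed.

Lemma leibniz_addl s1 s2 t :
  leibniz_at d s1 t -> leibniz_at d s2 t -> leibniz_at d (s1 + s2) t.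
Proof. by rewrite /leibniz_at mulrDl !dD => -> ->; ring_expand; zmod_ac. Qed.

Lemma leibniz_addr s t1 t2 :
  leibniz_at d s t1 -> leibniz_at d s t2 -> leibniz_at d s (t1 + t2).
Proof. by rewrite /leibniz_at mulrDr !dD => -> ->; ring_expand; zmod_ac. Qed.

Lemma leibniz_orth s t a b : a * b = 0 -> s * a = s -> b * t = t ->
  d s * a = d s -> b * d t = d t -> leibniz_at d s t.
Proof.
move=> ab0 sa bt dsa bdt.
have zab x y : x * a * (b * y) = 0 by rewrite mulrA -(mulrA x) ab0 mulr0 mul0r.
rewrite /leibniz_at.
have -> : s * t = 0 by rewrite -sa -bt zab.
have -> : d s * t = 0 by rewrite -dsa -bt zab.
have -> : s * d t = 0 by rewrite -sa -bdt zab.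
by rewrite additive_map0 addr0.
Qed.

End AdditiveMap.

Lemma corner_idem (R : nzRingType) (u v D : R) :
  D = u * D * v -> u * u = u -> v * v = v -> u * D = D /\ D * v = D.
Proof. by move=> DE uu vv; rewrite DE !mulrA uu -!mulrA vv. Qed.

Section Peirce.

Variables (R : nzRingType) (e f : R).
Hypotheses (ee : e * e = e) (hef : e + f = 1).

Lemma peirce_decomp y : y = e*y*e + e*y*f + f*y*e + f*y*f.
Proof.
have {1}<- : (e + f) * y * (e + f) = y by rewrite hef mul1r mulr1.
by ring_expand; zmod_ac.
Qed.

Lemma peirce_compl : f = 1 - e.
Proof. by rewrite -hef addrAC subrr add0r. Qed.

Lemma peirce_idem : f * f = f.
Proof. by rewrite peirce_compl mulrBl mul1r mulrBr mulr1 ee subrr subr0. Qed.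

Lemma peirce_orth : e * f = 0.
Proof. by rewrite peirce_compl mulrBr mulr1 ee subrr. Qed.

Lemma peirce_orth' : f * e = 0.
Proof. by rewrite peirce_compl mulrBl mul1r ee subrr. Qed.

Lemma peirce_sym : f + e = 1.
Proof. by rewrite addrC. Qed.

End Peirce.

Section OrthJderivable.

Variables (R : nzRingType) (d : R -> R).
Hypotheses (dD : additive_map d) (dJ : orth_jderivable d).
Hypotheses (tf2 : two_torsion_free R) (prR : prime_ring R).

Lemma orth_jderivableE A B : A * B = 0 -> B * A = 0 ->
  d A * B + B * d A + A * d B + d B * A = 0.
Proof. by move=> AB BA; have := dJ AB BA; rewrite /jprod !addrA. Qed.

Local Ltac halve H := apply: tf2; rewrite mulr2n; zmod_ac_from H.

Section Corners.

Variables e f : R.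
Hypotheses (ee : e * e = e) (hef : e + f = 1).

Let ff := peirce_idem ee hef.
Let ef := peirce_orth ee hef.
Let fe := peirce_orth' ee hef.

Local Ltac pnorm := peirce_norm ee ff ef fe.
Local Ltac pnorm_in H := peirce_norm_in H ee ff ef fe.
Local Ltac pzero := pnorm; first [done | zmod_ac].
Local Ltac test_orth A B H :=
  pose proof (@orth_jderivableE A B ltac:(pzero) ltac:(pzero)) as H.

Lemma d1_comm_idem : d 1 * e = e * d 1.
Proof.
have df : d f = d 1 - d e by rewrite -hef dD addrAC subrr add0r.
test_orth e f J; rewrite df in J.
sandwich J e f Jef; pnorm_in Jef.
sandwich J f e Jfe; pnorm_in Jfe.
have ecf : e * d 1 * f = 0 by zmod_ac_from Jef.
have fce : f * d 1 * e = 0 by zmod_ac_from Jfe.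
by rewrite {1 2}(peirce_decomp hef (d 1)); pnorm; rewrite ecf fce; zmod_ac.
Qed.

Lemma d_idem_diag0 : d 1 = 0 -> e * d e * e = 0 /\ f * d e * f = 0.
Proof.
move=> d1.
have df : d f = - d e by apply/eqP; rewrite -addr_eq0 addrC -dD hef d1.
test_orth e f J; rewrite df in J.
sandwich J e e Jee; pnorm_in Jee.
sandwich J f f Jff; pnorm_in Jff.
by split; [halve Jee | halve Jff].
Qed.

Lemma d_diag_corner x : d f = 0 -> d (e*x*e) = e * d (e*x*e) * e.
Proof.
move=> df; set y := d (e*x*e).
test_orth (e*x*e) f J; rewrite df mulr0 mul0r !addr0 -/y in J.
sandwich J f f Jff; pnorm_in Jff.
sandwich J e f Jef; pnorm_in Jef.
sandwich J f e Jfe; pnorm_in Jfe.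
have fyf : f * y * f = 0 by halve Jff.
by rewrite {1}(peirce_decomp hef y) fyf Jef Jfe; zmod_ac.
Qed.

Lemma d_offdiag_corner x : d e = 0 -> d f = 0 -> d (e*x*f) = e * d (e*x*f) * f.
Proof.
move=> de df; set W := d (e*x*f).
test_orth (e*x*f) (e*x*f) Jsq.
test_orth (e + e*x*f) (f - e*x*f) Jsum.
rewrite !dD !(additive_mapN dD) de df -/W add0r sub0r in Jsum.
sandwich Jsq e e Jsq_ee; pnorm_in Jsq_ee.
sandwich Jsq f f Jsq_ff; pnorm_in Jsq_ff.
sandwich Jsum e e Jsum_ee; pnorm_in Jsum_ee.
sandwich Jsum f f Jsum_ff; pnorm_in Jsum_ff.
have exfWe : e*x*f*W*e = 0 by halve Jsq_ee.
have fWexf : f*W*e*x*f = 0 by halve Jsq_ff.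
rewrite exfWe ?fWexf in Jsum_ee Jsum_ff.
have eWe : e*W*e = 0 by halve Jsum_ee.
have fWf : f*W*f = 0 by halve Jsum_ff.
have fWe_Rexf u : f*W*e*u*(e*x*f) = 0.
  test_orth (e*u*e + e*(u*e*x)*f) (f - e*x*f) J.
  rewrite !dD (additive_mapN dD) df -/W sub0r (d_diag_corner u df) in J.
  set U := d (e*(u*e*x)*f) in J.
  sandwich J f e Jfe; pnorm_in Jfe.
  have fUe : f*U*e = f*W*e*u*e by zmod_ac_from Jfe.
  test_orth (e*x*f) (e*(u*e*x)*f) J'; rewrite -/W -/U in J'.
  sandwich J' f f J'ff; pnorm_in J'ff.
  have fUexf := congr1 (fun z => z * x * f) fUe; rewrite /= in fUexf.
  rewrite fUexf in J'ff.
  by apply: tf2; rewrite mulr2n; ring_expand; zmod_ac_from J'ff.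
have fWe : f*W*e = 0.
  case: (prR fWe_Rexf) => // exf0.
  by rewrite /W exf0 (additive_map0 dD) mulr0 mul0r.
by rewrite {1}(peirce_decomp hef W) eWe fWf fWe; zmod_ac.
Qed.

End Corners.

Section Leibniz.

Variables e f : R.
Hypotheses (ee : e * e = e) (hef : e + f = 1) (de : d e = 0) (df : d f = 0).

Let ff := peirce_idem ee hef.
Let ef := peirce_orth ee hef.
Let fe := peirce_orth' ee hef.
Let hfe := peirce_sym hef.

Let dE_ee x := d_diag_corner ee hef x df.
Let dE_ff x := d_diag_corner ff hfe x de.
Let dE_ef x := d_offdiag_corner ee hef x de df.
Let dE_fe x := d_offdiag_corner ff hfe x df de.

Local Ltac pnorm := peirce_norm ee ff ef fe.
Local Ltac pnorm_in H := peirce_norm_in H ee ff ef fe.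
Local Ltac pzero := pnorm; first [done | zmod_ac].
Local Ltac test_orth A B H :=
  pose proof (@orth_jderivableE A B ltac:(pzero) ltac:(pzero)) as H.

Lemma leibniz_diag_offdiag u x : leibniz_at d (e*u*e) (e*x*f).
Proof.
rewrite /leibniz_at; have -> : e*u*e*(e*x*f) = e*(u*e*x)*f by pzero.
test_orth (e*u*e + e*(u*e*x)*f) (f - e*x*f) J.
rewrite !dD (additive_mapN dD) df sub0r in J.
rewrite (dE_ee u) (dE_ef (u*e*x)) (dE_ef x) in J *.
sandwich J e f Jef; pnorm_in Jef.
by pnorm; zmod_ac_from Jef.
Qed.

Lemma leibniz_offdiag_diag x v : leibniz_at d (e*x*f) (f*v*f).
Proof.
rewrite /leibniz_at; have -> : e*x*f*(f*v*f) = e*(x*f*v)*f by pzero.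
test_orth (e + e*x*f) (f*v*f - e*(x*f*v)*f) J.
rewrite !dD (additive_mapN dD) de add0r in J.
rewrite (dE_ff v) (dE_ef (x*f*v)) (dE_ef x) in J *.
sandwich J e f Jef; pnorm_in Jef.
by pnorm; zmod_ac_from Jef.
Qed.

Lemma leibniz_offdiag_offdiag x y : leibniz_at d (e*x*f) (f*y*e).
Proof.
rewrite /leibniz_at; have -> : e*x*f*(f*y*e) = e*(x*f*y)*e by pzero.
test_orth (e + e*x*f + f*y*e + f*(y*e*x)*f)
          (f - e*x*f - f*y*e + e*(x*f*y)*e) J.
rewrite !dD !(additive_mapN dD) de df ?add0r ?sub0r in J.
rewrite (dE_ef x) (dE_fe y) (dE_ff (y*e*x)) (dE_ee (x*f*y)) in J *.
sandwich J e e Jee; pnorm_in Jee.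
apply/eqP; rewrite -subr_eq0; apply/eqP; apply: tf2; rewrite mulr2n.
by pnorm; zmod_ac_from Jee.
Qed.

(* Associativity of [(e u e)(e v e)(e w f)], expanded with the Leibniz rule
   on the diagonal-off-diagonal products, shows that the defect of the
   Leibniz rule on [(e u e)(e v e)] annihilates [R f] on the right. *)
Lemma leibniz_diag_diag u v : f <> 0 -> leibniz_at d (e*u*e) (e*v*e).
Proof.
move=> f0; rewrite /leibniz_at; have -> : e*u*e*(e*v*e) = e*(u*e*v)*e by pzero.
set del := d (e*(u*e*v)*e) - (d (e*u*e) * (e*v*e) + e*u*e * d (e*v*e)).
suff : del = 0 by move/eqP; rewrite subr_eq0 => /eqP.
have del_Rf w : del * w * f = 0.
  have uv_w := leibniz_diag_offdiag (u*e*v) w.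
  have u_vw := leibniz_diag_offdiag u (v*e*w).
  have v_w := leibniz_diag_offdiag v w.
  rewrite /leibniz_at in uv_w u_vw v_w.
  rewrite (_ : e*(u*e*v)*e*(e*w*f) = e*(u*e*v*e*w)*f) in uv_w; last by pzero.
  rewrite (_ : e*u*e*(e*(v*e*w)*f) = e*(u*e*v*e*w)*f) in u_vw; last by pzero.
  rewrite (_ : e*v*e*(e*w*f) = e*(v*e*w)*f) in v_w; last by pzero.
  rewrite uv_w v_w in u_vw.
  rewrite /del (dE_ee (u*e*v)) (dE_ee u) (dE_ee v) (dE_ef w) in u_vw *.
  move/eqP: u_vw; rewrite -subr_eq0 => /eqP u_vw.
  pnorm_in u_vw; pnorm.
  by zmod_ac_from u_vw.
by case: (prR del_Rf) => // /f0.
Qed.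

End Leibniz.

Lemma leibniz_of_peirce_vanishing e f :
  e * e = e -> e + f = 1 -> d e = 0 -> d f = 0 -> e <> 0 -> f <> 0 ->
  forall x y, leibniz_at d x y.
Proof.
move=> ee hef de df e0 f0 x y.
have ff := peirce_idem ee hef; have hfe := peirce_sym hef.
have ef := peirce_orth ee hef; have fe := peirce_orth' ee hef.
have dC_ee z := corner_idem (d_diag_corner ee hef z df) ee ee.
have dC_ff z := corner_idem (d_diag_corner ff hfe z de) ff ff.
have dC_ef z := corner_idem (d_offdiag_corner ee hef z de df) ee ff.
have dC_fe z := corner_idem (d_offdiag_corner ff hfe z df de) ff ee.
rewrite (peirce_decomp hef x) (peirce_decomp hef y).
repeat (apply: (leibniz_addl dD) || apply: (leibniz_addr dD)).
(* Eight of the sixteen corner products vanish on both sides. *)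
all: first
  [ exact: (leibniz_diag_diag ee hef de df _ _ f0)
  | exact: (leibniz_diag_diag ff hfe df de _ _ e0)
  | exact: (leibniz_diag_offdiag ee hef de df)
  | exact: (leibniz_diag_offdiag ff hfe df de)
  | exact: (leibniz_offdiag_diag ee hef de df)
  | exact: (leibniz_offdiag_diag ff hfe df de)
  | exact: (leibniz_offdiag_offdiag ee hef de df)
  | exact: (leibniz_offdiag_offdiag ff hfe df de)
  | apply: (leibniz_orth dD ef); [by rewrite -mulrA ee | by rewrite !mulrA ff | |]
  | apply: (leibniz_orth dD fe); [by rewrite -mulrA ff | by rewrite !mulrA ee | |] ].
all: by rewrite ?(dC_ee _).1 ?(dC_ee _).2 ?(dC_ff _).1 ?(dC_ff _).2
  ?(dC_ef _).1 ?(dC_ef _).2 ?(dC_fe _).1 ?(dC_fe _).2.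
Qed.

End OrthJderivable.

Section CommIdempotents.

Variables (R : nzRingType) (c : R).
Hypotheses (prR : prime_ring R) (c_idem : forall g : R, g * g = g -> c * g = g * c).

Section CommCorners.

Variables e f : R.
Hypotheses (ee : e * e = e) (hef : e + f = 1).

Let ff := peirce_idem ee hef.
Let ef := peirce_orth ee hef.
Let fe := peirce_orth' ee hef.
Let ce := c_idem ee.

Local Ltac pnorm := peirce_norm ee ff ef fe.
Local Ltac pnorm_in H := peirce_norm_in H ee ff ef fe.

Lemma comm_offdiag x : c * (e*x*f) = e*x*f*c.
Proof.
have idem_exf : (e + e*x*f) * (e + e*x*f) = e + e*x*f by pnorm.
by have := c_idem idem_exf; rewrite mulrDr mulrDl ce => /addrI.
Qed.

Lemma comm_diag z : f <> 0 -> c * (e*z*e) = e*z*e*c.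
Proof.
move=> f0.
have comm_Rf x : (c * (e*z*e) - e*z*e*c) * x * f = 0.
  have cexf := comm_offdiag (z*e*x).
  have ezcexf := congr1 (fun t => e * z * t) (comm_offdiag x).
  rewrite /= in ezcexf; pnorm_in cexf; pnorm_in ezcexf.
  rewrite (mulr_subst2 ce) !mulrA in ezcexf.
  by pnorm; rewrite cexf ezcexf subrr.
by case: (prR comm_Rf) => [/eqP|/f0 //]; rewrite subr_eq0 => /eqP.
Qed.

End CommCorners.

Lemma comm_idem_central (P : R) : P * P = P -> P <> 0 -> P <> 1 ->
  forall z, c * z = z * c.
Proof.
move=> PP P0 P1 z.
set Q := 1 - P; have hPQ : P + Q = 1 by rewrite addrC subrK.
clearbody Q; have QQ := peirce_idem PP hPQ; have hQP := peirce_sym hPQ.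
have Q0 : Q <> 0 by move=> Q0; apply: P1; rewrite -hPQ Q0 addr0.
rewrite (peirce_decomp hPQ z) !mulrDr !mulrDl.
by rewrite (comm_diag PP hPQ _ Q0) (comm_diag QQ hQP _ P0)
  (comm_offdiag PP hPQ) (comm_offdiag QQ hQP).
Qed.

End CommIdempotents.

Lemma orth_jderivable_subr_mull (R : nzRingType) (d : R -> R) (c : R) :
  (forall z, c * z = z * c) -> orth_jderivable d ->
  orth_jderivable (fun X => d X - c * X).
Proof.
move=> cC dJ A B AB BA; have := dJ A B AB BA; rewrite /jprod !mulrBl !mulrBr.
have cAB : c * A * B = 0 by rewrite -mulrA AB mulr0.
have BcA : B * (c * A) = 0 by rewrite mulrA -cC -mulrA BA mulr0.
have AcB : A * (c * B) = 0 by rewrite mulrA -cC -mulrA AB mulr0.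
have cBA : c * B * A = 0 by rewrite -mulrA BA mulr0.
by rewrite cAB BcA AcB cBA !subr0.
Qed.

Lemma orth_jderivable_subr_inner (R : nzRingType) (d : R -> R) (T : R) :
  orth_jderivable d -> orth_jderivable (fun X => d X - (T * X - X * T)).
Proof.
move=> dJ A B AB BA; have := dJ A B AB BA; rewrite /jprod => J.
by peirce_norm AB BA AB BA; zmod_ac_from J.
Qed.

(* Subtracting the inner derivation [ad T] with [T = Q d(P) P - P d(P) Q]
   makes [d] vanish on [P] and [Q = 1 - P]. *)
Lemma orth_jderivable_derivation (R : nzRingType) (d : R -> R) (P : R) :
  prime_ring R -> two_torsion_free R -> additive_map d -> orth_jderivable d ->
  P * P = P -> P <> 0 -> P <> 1 -> d 1 = 0 -> is_derivation d.
Proof.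
move=> prR tf2 dD dJ PP P0 P1 d1; split=> // x y.
set Q := 1 - P; have hPQ : P + Q = 1 by rewrite addrC subrK.
clearbody Q; have QQ := peirce_idem PP hPQ.
have PQ := peirce_orth PP hPQ; have QP := peirce_orth' PP hPQ.
have Q0 : Q <> 0 by move=> Q0; apply: P1; rewrite -hPQ Q0 addr0.
have [PdPP QdPQ] := d_idem_diag0 dD dJ tf2 PP hPQ d1.
set T := Q * d P * P - P * d P * Q.
pose d0 X := d X - (T * X - X * T).
have d0D : additive_map d0 by move=> X Y; rewrite /d0 dD; ring_expand; zmod_ac.
have d0J : orth_jderivable d0 := orth_jderivable_subr_inner T dJ.
have d01 : d0 1 = 0 by rewrite /d0 d1 mulr1 mul1r subrr subr0.
have d0P : d0 P = 0.
  rewrite /d0 /T {1}(peirce_decomp hPQ (d P)).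
  by peirce_norm PP QQ PQ QP; rewrite PdPP QdPQ; zmod_ac.
have d0Q : d0 Q = 0 by have := d0D P Q; rewrite hPQ d01 d0P add0r.
have := leibniz_of_peirce_vanishing d0D d0J tf2 prR PP hPQ d0P d0Q P0 Q0 x y.
rewrite /leibniz_at /d0 => /eqP; rewrite -subr_eq0 => /eqP L.
by ring_expand_in L; ring_expand; zmod_ac_from L.
Qed.

Unset Implicit Arguments.

Theorem corollary2p9 (R : nzRingType) (P : R) (phi : R -> R)
  (Hprime : prime_ring R) (H2 : two_torsion_free R)
  (HP : P * P = P) (HP0 : P <> 0) (HP1 : P <> 1)
  (Hadd : additive_map phi)
  (Hphi : forall A B : R, A * B = 0 -> B * A = 0 ->
            jprod (phi A) B + jprod A (phi B) = 0) :
  (exists delta eta : R -> R,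
      is_derivation delta /\ is_multiplier eta /\
      forall X : R, phi X = delta X + eta X) /\
  (phi 1 = 0 -> is_derivation phi).
Proof.
have c_central : forall z, phi 1 * z = z * phi 1.
  apply: (comm_idem_central Hprime _ HP HP0 HP1) => g gg.
  by apply: (d1_comm_idem (f := 1 - g) Hadd Hphi gg); rewrite addrC subrK.
pose delta X := phi X - phi 1 * X.
have deltaD : additive_map delta.
  by move=> X Y; rewrite /delta Hadd mulrDr; zmod_ac.
have delta_der : is_derivation delta.
  apply: (orth_jderivable_derivation Hprime H2 deltaD _ HP HP0 HP1).
    exact: orth_jderivable_subr_mull c_central Hphi.
  by rewrite /delta mulr1 subrr.
split.
  exists delta, (fun X => phi 1 * X); split=> //; split.
    split=> [X Y|X]; first by rewrite mulrDr.
    by rewrite mulr1; split=> //; apply: c_central.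
  by move=> X; rewrite /delta subrK.
move=> phi1; split=> // X Y.
by have := delta_der.2 X Y; rewrite /delta phi1 !mul0r !subr0.
Qed.
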